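(* Let $p$, $F$, $a$, $K$, $J_1$ be as in the context. The sequence $$0\longrightarrow\langle[a]\rangle\xrightarrow{\ i\ }F^\times/F^{\times p}\xrightarrow{\ \epsilon\ }J_1\xrightarrow{\ N\ }\langle[a]\rangle$$ is well defined and exact, where $\langle[a]\rangle\subseteq F^\times/F^{\times p}$ is the subgroup generated by the class of $a$, $i$ is inclusion, $\epsilon$ is induced by the inclusion $F^\times\subseteq K^\times$, and $N$ is induced by the norm $N_{K/F}\colon K^\times\to F^\times$ (in particular $[N_{K/F}(\theta)]\in\langle[a]\rangle$ for every $[\theta]\in J_1$). Moreover, $N\colon J_1\to\langle[a]\rangle$ is surjective if and only if $\xi_p\in N_{K/F}(K^\times)$.
   Context: Let $p$ be a prime and $F$ a field of characteristic different from $p$ containing a primitive $p$th root of unity $\xi_p$. Let $a\in F^\times\setminus F^{\times p}$ and $K=F(\sqrt[p]{a})$, a cyclic extension of degree $p$; $K^\times=K\setminus\{0\}$. Let $G=\mathrm{Gal}(K/F)$, $J=K^\times/K^{\times p}$, and $J_1=J^G$ the submodule of $G$-fixed elements of $J$. *)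

From HB Require Import structures.
From mathcomp Require Import all_boot all_order all_algebra all_fingroup all_field.
Set Implicit Arguments. Unset Strict Implicit. Unset Printing Implicit Defensive.
Import GRing.Theory.
Local Open Scope ring_scope.

Definition ppow (p : nat) {R : pzRingType} (x : R) : Prop := exists y : R, x = y ^+ p.

(* theta (in K^x) represents an element of J_1 = (K^x/K^xp)^G,
   where G = Gal(K/F) = 'Gal({:L} / 1) *)
Definition inJ1 (F : fieldType) (L : splittingFieldType F) (p : nat) (theta : L) : Prop :=
  theta != 0 /\
  forall g : gal_of {:L}, g \in 'Gal({:L} / 1%VS)%g -> ppow p (g theta / theta).

Definition normKF (F : fieldType) (L : splittingFieldType F) (theta : L) : L :=
  galNorm 1%VS {:L} theta.

From HB Require Import structures.
From mathcomp Require Import all_boot all_order all_algebra all_fingroup all_field.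
From mathcomp Require Import cyclic ring.

(* Fix s in Gal(K/F) with s(alpha) = xi alpha; it generates Gal(K/F), of order p.
   A class [theta] lies in J_1 iff s(theta) = theta b^p for some b, and then
   w := theta gamma(b), where gamma(b) = prod_(i<p) prod_(j<i) s^j(b) is
   [pnorm_prod s b], satisfies w^p = N(theta) and s(w) = N(b) w.  Thus N(theta)
   is a p-th power in K, hence of the form a^k y^p in F by Kummer theory.  If
   moreover s(z) = xi^m z for a p-th root z of N(theta), then w = xi^j z forces
   N(b) = xi^m.  When N(theta) = y^p (z = y, m = 0), Hilbert 90 writes
   b = c / s(c) and theta c^p lies in F: this is exactness at J_1.  When
   N(theta) = a y^p (z = alpha y, m = 1) we get N(b) = xi; conversely, if
   N(b) = xi then theta := alpha / gamma(b) lies in J_1 and has norm a. *)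

Set Implicit Arguments.
Unset Strict Implicit.
Unset Printing Implicit Defensive.

Import GRing.Theory.
Local Open Scope ring_scope.

Section CyclicGalois.

Variables (F : fieldType) (L : splittingFieldType F) (s : gal_of {:L}).

Definition pnorm (b : L) (i : nat) : L := \prod_(j < i) (s ^+ j)%g b.

Lemma pnorm0 b : pnorm b 0 = 1.
Proof. by rewrite /pnorm big_ord0. Qed.

Lemma pnormS b i : pnorm b i.+1 = b * s (pnorm b i).
Proof.
rewrite /pnorm big_ord_recl expg0 gal_id rmorph_prod; congr (_ * _).
by apply: eq_bigr => j _; rewrite lift0 expgSr galM ?memvf.
Qed.

Lemma galX_cocycle (t b : L) e i :
  s t = t * b ^+ e -> (s ^+ i)%g t = t * pnorm b i ^+ e.
Proof.
move=> st; elim: i => [|i IHi]; first by rewrite expg0 gal_id pnorm0 expr1n mulr1.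
by rewrite expgSr galM ?memvf // IHi rmorphM rmorphXn /= st pnormS exprMn mulrA.
Qed.

Hypothesis gen_s : generator 'Gal({:L} / 1%VS) s.

Lemma galNorm_cycle t : galNorm 1 {:L} t = \prod_(i < #[s]%g) (s ^+ i)%g t.
Proof.
rewrite /galNorm; have -> : 'Gal({:L} / 1%VS)%g = [set (s ^+ val i)%g | i : 'I_#[s]%g].
  apply/setP => g; rewrite (eqP gen_s).
  apply/idP/imsetP => [/cyclePmin[i lt_i ->] | [i _ ->]]; last exact: mem_cycle.
  by exists (Ordinal lt_i).
rewrite big_imset // => i j _ _ /eqP.
by rewrite eq_expg_mod_order !modn_small ?ltn_ord // => /eqP/val_inj.
Qed.

Definition pnorm_prod (b : L) : L := \prod_(i < #[s]%g) pnorm b i.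

Lemma pnorm_prod_neq0 b : b != 0 -> pnorm_prod b != 0.
Proof.
move=> b0; apply/prodf_neq0 => i _; apply/prodf_neq0 => j _.
by rewrite fmorph_eq0.
Qed.

Lemma galNorm_cocycle t b :
  s t = t * b ^+ #[s]%g -> galNorm 1 {:L} t = (t * pnorm_prod b) ^+ #[s]%g.
Proof.
move=> st; rewrite galNorm_cycle.
under eq_bigr => i _ do rewrite (galX_cocycle i st).
by rewrite big_split /= prodr_const card_ord prodrXl exprMn.
Qed.

Lemma gal_pnorm_prod b : s (pnorm_prod b) * b ^+ #[s]%g = pnorm_prod b * galNorm 1 {:L} b.
Proof.
have -> : b ^+ #[s]%g = \prod_(i < #[s]%g) b by rewrite prodr_const card_ord.
rewrite /pnorm_prod rmorph_prod -big_split /=.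
under eq_bigr => i _ do rewrite mulrC -pnormS.
rewrite galNorm_cycle -/(pnorm b _).
transitivity (\prod_(i < #[s]%g.+1) pnorm b i); last by rewrite big_ord_recr.
by rewrite big_ord_recl pnorm0 mul1r.
Qed.

Hypothesis galois_L : galois 1 {:L}.

Lemma gal_cycle_fixed u : s u = u -> u \in 1%VS.
Proof.
move=> su; rewrite -(galois_fixedField galois_L); apply/fixedFieldP; first exact: memvf.
move=> g; rewrite (eqP gen_s) => /cycleP[i ->]; elim: i => [|i IHi].
  by rewrite expg0 gal_id.
by rewrite expgSr galM ?memvf // IHi.
Qed.

End CyclicGalois.

Lemma eq_exprn_prim_root (R : fieldType) n (z x y : R) :
  n.-primitive_root z -> y != 0 -> x ^+ n = y ^+ n -> exists i, x = z ^+ i * y.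
Proof.
move=> prim_z nz_y exy.
have xy1 : (x / y) ^+ n = 1 by rewrite expr_div_n exy divff // expf_neq0.
by have [i def_xy] := prim_rootP prim_z xy1; exists i; rewrite -def_xy divfK.
Qed.

Lemma separable_XnsubC (R : idomainType) n (c : R) :
  n%:R != 0 :> R -> c != 0 -> separable_poly ('X^n - c%:P).
Proof.
case: n => [/eqP// | n nz_n nz_c]; rewrite unlock linearB /= derivC subr0.
rewrite derivXn -scaler_nat coprimepZr //= exprS coprimep_sym.
by rewrite coprimep_addl_mul -polyCN -alg_polyC coprimepZr ?oppr_eq0 ?coprimep1.
Qed.

Section Kummer.

Variables (F : fieldType) (L : splittingFieldType F) (p : nat) (xi a : F) (alpha : L).
Hypotheses (p_pr : prime p) (xi_prim : p.-primitive_root xi) (a_neq0 : a != 0)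
  (alpha_p : alpha ^+ p = a%:A) (L_gen : <<1; alpha>>%VS = fullv).

Local Notation G := 'Gal({:L} / 1%VS)%g.

Let p_gt0 : (0 < p)%N := prime_gt0 p_pr.

Let mem1A (c : F) : (c%:A : L) \in 1%VS := memvZ c (mem1v _).
Let algM (c d : F) : ((c * d)%:A : L) = c%:A * d%:A := rmorphM (in_alg L) c d.
Let algX (c : F) n : ((c ^+ n)%:A : L) = c%:A ^+ n := rmorphXn (in_alg L) n c.
Let alg_eq0 (c : F) : ((c%:A : L) == 0) = (c == 0) := fmorph_eq0 (in_alg L) c.
Let normKF_eq0 (t : L) : (normKF t == 0) = (t == 0) := galNorm_eq0 1 {:L} t.

Let xi_neq0 : xi != 0.
Proof. by rewrite (prim_root_eq0 xi_prim) -lt0n. Qed.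

Lemma xi_prim_L : p.-primitive_root (xi%:A : L).
Proof. by rewrite (fmorph_primitive_root (in_alg L)). Qed.

Lemma alpha_neq0 : alpha != 0.
Proof.
have : (a%:A : L) != 0 by rewrite alg_eq0.
by rewrite -alpha_p expf_eq0 p_gt0.
Qed.

Lemma Kummer_galois : galois 1 {:L}.
Proof.
rewrite /galois subvf normalFieldf andbT -L_gen -adjoin_separable_eq.
apply/separable_elementP; exists ('X^p - (a%:A)%:P).
rewrite polyOverXnsubC mem1A /root !hornerE alpha_p subrr eqxx /=.
by rewrite separable_XnsubC ?(prim_root_natf_neq0 xi_prim_L) // alg_eq0.
Qed.

Lemma Kummer_gal_card : (#|G| <= p)%N.
Proof.
rewrite -galois_dim ?Kummer_galois //.
have -> : \dim_(1%AS : {subfield L}) {:L}%AS = adjoin_degree 1%AS alpha.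
  by rewrite adjoin_degreeE L_gen.
rewrite -ltnS -size_minPoly -(size_XnsubC (a%:A : L) p_gt0).
apply: dvdp_leq; first by rewrite -size_poly_eq0 (size_XnsubC _ p_gt0).
by apply: minPoly_dvdp; rewrite ?polyOverXnsubC ?mem1A // /root !hornerE alpha_p subrr.
Qed.

Lemma gal_scalar g c : g \in G -> g c%:A = c%:A.
Proof. by move=> gG; rewrite (fixed_gal (subvf _) gG (mem1A c)). Qed.

Lemma galX_eigen g c x j : g \in G -> g x = c%:A * x -> (g ^+ j)%g x = (c ^+ j)%:A * x.
Proof.
move=> gG gx; elim: j => [|j IHj]; first by rewrite expg0 gal_id expr0 scale1r mul1r.
by rewrite expgSr galM ?memvf // IHj rmorphM /= gx gal_scalar // mulrA -scalerAl mul1r scalerA -exprSr.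
Qed.

Lemma alpha_notin1 : ~ ppow p a -> alpha \notin 1%VS.
Proof.
move=> a_npow; apply/negP => /vlineP[c alpha_c]; apply: a_npow; exists c.
by apply: (fmorph_inj (in_alg L)); rewrite rmorphXn /= -alpha_p alpha_c.
Qed.

Lemma Kummer_gen_exists : ~ ppow p a -> exists2 s, s \in G & s alpha = xi%:A * alpha.
Proof.
move=> /alpha_notin1 alpha_notin1.
have /exists_inP[s0 s0G s0_alpha] : [exists s0 in G, s0 alpha != alpha].
  apply: contraNT alpha_notin1 => /exists_inPn fixG.
  rewrite -(galois_fixedField Kummer_galois); apply/fixedFieldP; first exact: memvf.
  by move=> g /fixG/negPn/eqP.
have : s0 alpha ^+ p = alpha ^+ p by rewrite -rmorphXn /= alpha_p gal_scalar.
case/(eq_exprn_prim_root xi_prim_L alpha_neq0) => i.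
rewrite exprZn expr1n; set zeta := xi ^+ i => s0_eigen.
have zeta_prim : p.-primitive_root zeta.
  rewrite prim_root_exp_coprime // coprime_sym prime_coprime // (prim_order_dvd xi_prim).
  by apply: contra s0_alpha => /eqP zeta1; rewrite s0_eigen /zeta zeta1 scale1r mul1r.
have [j xi_j] := prim_rootP zeta_prim (prim_expr_order xi_prim).
exists (s0 ^+ j)%g; first exact: groupX.
by rewrite (galX_eigen _ s0G s0_eigen) -xi_j.
Qed.

Variable s : gal_of {:L}.
Hypotheses (sG : s \in G) (s_alpha : s alpha = xi%:A * alpha).

Lemma Kummer_gen_order : #[s]%g = p.
Proof.
apply/eqP; rewrite eqn_leq (leq_trans _ Kummer_gal_card) ?subset_leq_card ?cycle_subG //=.
have : in_alg L (xi ^+ #[s]%g) = in_alg L 1.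
  apply: (mulIf alpha_neq0); rewrite rmorph1 mul1r /=.
  by rewrite -(galX_eigen _ sG s_alpha) expg_order gal_id.
move/fmorph_inj/eqP; rewrite -(prim_order_dvd xi_prim).
by apply: dvdn_leq; apply: order_gt0.
Qed.

Lemma Kummer_generator : generator G s.
Proof.
rewrite /generator eq_sym eqEcard cycle_subG sG /=.
by rewrite -[#|<[s]>%g|]/(#[s]%g) Kummer_gen_order Kummer_gal_card.
Qed.

Lemma inJ1_cocycle (t : L) : inJ1 p t <-> t != 0 /\ exists b, s t = t * b ^+ p.
Proof.
split=> [[t0 /(_ s sG)[b sb]] | [t0 [b st]]].
  by split=> //; exists b; rewrite -sb mulrC divfK.
split=> // g; rewrite (eqP Kummer_generator) => /cycleP[i ->].
by exists (pnorm s b i); rewrite (galX_cocycle i st) mulrC mulKf.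
Qed.

Lemma Kummer_galNorm_cocycle t b :
  s t = t * b ^+ p -> normKF t = (t * pnorm_prod s b) ^+ p.
Proof. by rewrite /normKF -Kummer_gen_order; apply: (galNorm_cocycle Kummer_generator). Qed.

Lemma Kummer_gal_pnorm_prod b : s (pnorm_prod s b) * b ^+ p = pnorm_prod s b * normKF b.
Proof. by rewrite /normKF -Kummer_gen_order; apply: (gal_pnorm_prod Kummer_generator). Qed.

Lemma galNorm_scalar c : normKF (c%:A : L) = (c ^+ p)%:A.
Proof.
rewrite /normKF (galNorm_cycle Kummer_generator) (eq_bigr (fun _ => c%:A)).
  by rewrite prodr_const card_ord Kummer_gen_order algX.
by move=> i _; rewrite gal_scalar ?groupX.
Qed.

Lemma galNorm_in1 (t : L) : exists c : F, normKF t = c%:A.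
Proof. by apply/vlineP; rewrite /normKF mem_galNorm ?Kummer_galois ?memvf. Qed.

Lemma Kummer_ppow_scalar x : x != 0 ->
  ppow p (x%:A : L) <-> exists k, ppow p (x / a ^+ k).
Proof.
move=> x0; split=> [[t xt] | [k [y xy]]]; last first.
  exists (y%:A * alpha ^+ k); rewrite exprMn exprAC alpha_p -!algX -algM.
  by rewrite -xy divfK ?expf_neq0.
have t0 : t != 0.
  by move: x0; rewrite -alg_eq0 xt expf_eq0 p_gt0.
have : s t ^+ p = t ^+ p by rewrite -rmorphXn /= -xt gal_scalar.
case/(eq_exprn_prim_root xi_prim_L t0) => j; rewrite -algX => st.
have /vlineP[c tc] : t / alpha ^+ j \in 1%VS.
  apply: (gal_cycle_fixed Kummer_generator Kummer_galois).
  rewrite fmorph_div rmorphXn /= st s_alpha exprMn -algX invfM mulrACA divff ?mul1r //.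
  by rewrite alg_eq0 expf_neq0.
exists j; exists c; apply: (fmorph_inj (in_alg L)); rewrite fmorph_div /= !algX xt.
by rewrite -tc expr_div_n exprAC alpha_p.
Qed.

Lemma inJ1_scalar x : x != 0 -> inJ1 p (x%:A : L).
Proof.
move=> x0; split=> [|g gG]; first by rewrite alg_eq0.
by exists 1; rewrite gal_scalar // divff ?expr1n // alg_eq0.
Qed.

Lemma normKF_inJ1 (t : L) : inJ1 p t ->
  exists k, exists y, y != 0 /\ normKF t = (a ^+ k * y ^+ p)%:A.
Proof.
case/inJ1_cocycle => t0 [b st]; have [c Nt] := galNorm_in1 t.
have c0 : c != 0.
  by move: t0; rewrite -normKF_eq0 Nt alg_eq0.
have [|k [y cy]] := (Kummer_ppow_scalar c0).1.
  by exists (t * pnorm_prod s b); rewrite -Nt (Kummer_galNorm_cocycle st).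
have c_ky : c = a ^+ k * y ^+ p by rewrite -cy mulrC divfK ?expf_neq0.
exists k, y; split; last by rewrite Nt c_ky.
by apply: contraNneq c0 => y0; rewrite c_ky y0 expr0n gtn_eqF // mulr0.
Qed.

Lemma normKF_ppow_ratio (t t' : L) : t != 0 -> t' != 0 -> ppow p (t / t') ->
  exists y, y != 0 /\ normKF t / normKF t' = (y ^+ p)%:A.
Proof.
move=> t0 t'0 [g tg]; have [c Ng] := galNorm_in1 g.
exists c; split; last by rewrite /normKF -galNormV -galNormM tg galNormX -/(normKF g) Ng algX.
have : g ^+ p != 0 by rewrite -tg mulf_neq0 ?invr_eq0.
by rewrite expf_eq0 p_gt0 /= -normKF_eq0 Ng alg_eq0.
Qed.

Lemma galNorm_cocycle_eigen (t b z : L) m :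
    s t = t * b ^+ p -> z != 0 -> s z = (xi ^+ m)%:A * z -> normKF t = z ^+ p ->
  normKF b = (xi ^+ m)%:A.
Proof.
move=> st z0 sz Nt; set w := t * pnorm_prod s b.
have wz : w ^+ p = z ^+ p by rewrite -Nt (Kummer_galNorm_cocycle st).
have w0 : w != 0 by move: (expf_neq0 p z0); rewrite -wz expf_eq0 p_gt0.
have [j wj] := eq_exprn_prim_root xi_prim_L z0 wz.
have sw : s w = w * normKF b.
  by rewrite rmorphM /= st -mulrA [b ^+ p * _]mulrC Kummer_gal_pnorm_prod mulrA.
apply: (mulfI w0); rewrite -sw wj rmorphM rmorphXn /= gal_scalar // sz.
by rewrite mulrCA mulrC.
Qed.

Lemma normKF_ppowP (t : L) : inJ1 p t ->
  (exists y, normKF t = (y ^+ p)%:A) <-> (exists x, x != 0 /\ ppow p (t / x%:A)).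
Proof.
case/inJ1_cocycle => t0 [b st]; split=> [[y Nt] | [x [x0 [g tg]]]]; last first.
  have [c Ng] := galNorm_in1 g; exists (x * c).
  have -> : t = x%:A * g ^+ p by rewrite -tg mulrC divfK // alg_eq0.
  by rewrite /normKF galNormM galNormX -!/(normKF _) galNorm_scalar Ng exprMn algM !algX.
have y0 : (y%:A : L) != 0.
  by move: t0; rewrite -normKF_eq0 Nt algX expf_eq0 p_gt0.
have Nb : normKF b = 1.
  rewrite -[1](scale1r 1) -(expr0 xi).
  apply: (galNorm_cocycle_eigen st y0); first by rewrite gal_scalar // expr0 scale1r mul1r.
  by rewrite Nt algX.
have /(Hilbert's_theorem_90 Kummer_generator (memvf b))[c [_ c0] bc] :
    galNorm 1 {:L} b == 1 by rewrite -/(normKF b) Nb.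
have /vlineP[x tx] : t * c ^+ p \in 1%VS.
  apply: (gal_cycle_fixed Kummer_generator Kummer_galois).
  by rewrite rmorphM rmorphXn /= st bc expr_div_n -mulrA divfK // expf_neq0 ?fmorph_eq0.
have x0 : x != 0.
  by move: (mulf_neq0 t0 (expf_neq0 p c0)); rewrite tx alg_eq0.
exists x; split=> //; exists c^-1.
by rewrite -tx invfM mulrA divff // mul1r exprVn.
Qed.

Lemma normKF_onto_iff :
  (forall k, exists t : L, inJ1 p t /\ exists y, normKF t = (a ^+ k * y ^+ p)%:A)
  <-> (exists t : L, t != 0 /\ normKF t = xi%:A).
Proof.
split=> [onto | [b [b0 Nb]]].
  have [t [/inJ1_cocycle[t0 [b st]] [y Nt]]] := onto 1%N.
  have Nt0 : normKF t != 0 by rewrite normKF_eq0.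
  have y0 : (y%:A : L) != 0.
    by apply: contraNneq Nt0 => y0; rewrite Nt algM !algX y0 expr0n gtn_eqF // mulr0.
  have Nb : normKF b = xi%:A.
    rewrite -[xi]expr1; apply: (galNorm_cocycle_eigen st (z := alpha * y%:A)).
    - by rewrite mulf_neq0 ?alpha_neq0.
    - by rewrite rmorphM /= s_alpha gal_scalar // mulrA expr1.
    - by rewrite Nt exprMn alpha_p algM !algX expr1.
  exists b; split=> //; apply: contraNneq Nt0 => b0.
  by rewrite normKF_eq0 -(fmorph_eq0 s) /= st b0 expr0n gtn_eqF // mulr0.
set g := pnorm_prod s b; have g0 : g != 0 by apply: pnorm_prod_neq0.
have sg : s g = g * xi%:A / b ^+ p by rewrite -Nb -Kummer_gal_pnorm_prod mulfK ?expf_neq0.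
set t := alpha / g.
have st : s t = t * b ^+ p.
  rewrite fmorph_div /= s_alpha sg /t.
  by field; rewrite alg_eq0 xi_neq0 g0 expf_neq0.
have Nt : normKF t = a%:A by rewrite (Kummer_galNorm_cocycle st) divfK.
move=> k; exists (t ^+ k); split.
  apply/inJ1_cocycle; split; first by rewrite expf_neq0 // mulf_neq0 ?alpha_neq0 ?invr_eq0.
  by exists (b ^+ k); rewrite rmorphXn /= st exprMn exprAC.
by exists 1; rewrite /normKF galNormX -/(normKF t) Nt expr1n mulr1 algX.
Qed.

End Kummer.

Theorem mainTheorem10 (F : fieldType) (L : splittingFieldType F) (p : nat)
    (xi a : F) (alpha : L) :
  prime p -> p \notin [pchar F] -> p.-primitive_root xi ->
  a != 0 -> ~ ppow p a ->
  alpha ^+ p = a%:A -> <<1%VS; alpha>>%VS = fullv ->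
  [/\
   (* exactness at F^x/F^xp: ker(epsilon) = <[a]> *)
   forall x : F, x != 0 ->
     (ppow p (x%:A : L) <-> exists k : nat, ppow p (x / a ^+ k)),
   (* epsilon is well defined: F^x lands in J_1, and F^xp in K^xp *)
   (forall x : F, x != 0 -> inJ1 p (x%:A : L)) /\
   (forall x y : F, x != 0 -> y != 0 -> ppow p (x / y) ->
      ppow p (x%:A / y%:A : L)),
   (* N is well defined: N(J_1) lands in <[a]>, and N respects classes *)
   (forall theta : L, inJ1 p theta ->
      exists k : nat, exists y : F, y != 0 /\ normKF theta = (a ^+ k * y ^+ p)%:A) /\
   (forall theta theta' : L, inJ1 p theta -> inJ1 p theta' ->
      ppow p (theta / theta') ->
      exists y : F, y != 0 /\ normKF theta / normKF theta' = (y ^+ p)%:A),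
   (* exactness at J_1: ker(N) = im(epsilon) *)
   forall theta : L, inJ1 p theta ->
     ((exists y : F, normKF theta = (y ^+ p)%:A) <->
      (exists x : F, x != 0 /\ ppow p (theta / x%:A)))
   &
   (* N : J_1 -> <[a]> is surjective iff xi is a norm *)
   (forall k : nat, exists theta : L, inJ1 p theta /\
      exists y : F, normKF theta = (a ^+ k * y ^+ p)%:A)
   <-> (exists theta : L, theta != 0 /\ normKF theta = xi%:A)].
Proof.
(* p is not the characteristic of F since F contains a primitive p-th root of unity. *)
move=> p_pr _ xi_prim a_neq0 a_npow alpha_p L_gen.
have [s sG s_alpha] := Kummer_gen_exists p_pr xi_prim a_neq0 alpha_p L_gen a_npow.
split.
- exact: (Kummer_ppow_scalar p_pr xi_prim a_neq0 alpha_p L_gen sG s_alpha).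
- split; first exact: inJ1_scalar.
  move=> x y _ _ [z xyz]; exists z%:A.
  by rewrite -[_ / _](fmorph_div (in_alg L)) xyz rmorphXn.
- split; first exact: (normKF_inJ1 p_pr xi_prim a_neq0 alpha_p L_gen sG s_alpha).
  move=> t t' [t0 _] [t'0 _].
  exact: (normKF_ppow_ratio p_pr xi_prim a_neq0 alpha_p L_gen).
- exact: (normKF_ppowP p_pr xi_prim a_neq0 alpha_p L_gen sG s_alpha).
- exact: (normKF_onto_iff p_pr xi_prim a_neq0 alpha_p L_gen sG s_alpha).
Qed.
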